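(* Let $n\ge 2$ and let $\mathsf{T}$ be a string of length $n$ over $\{\mathtt{a},\mathtt{b}\}$ ($\mathtt{a}<\mathtt{b}$) whose suffix array $P=\mathsf{SA}_{\mathsf{T}}=[p_1,\ldots,p_n]$ is an arithmetically progressed permutation with ratio $k$ and $p_1=1$. Let $m$ be the number of occurrences of $\mathtt{a}$ in $\mathsf{T}$ and let $\mathsf{T}'=\mathsf{T}[2..n]\mathsf{T}[1]$. Then $\mathsf{SA}_{\mathsf{T}'}[i]=p_i-1\bmod n$ for all $i$, and this sequence equals the $m$-th cyclic rotation of $P$, i.e. $\mathsf{SA}_{\mathsf{T}'}[i]=P[(i+m)\bmod n]$ for all $i\in[1..n]$; in particular $\mathsf{SA}_{\mathsf{T}'}[1]=n$ and $\mathsf{SA}_{\mathsf{T}'}$ is arithmetically progressed with ratio $k$. Moreover $\mathsf{BWT}_{\mathsf{T}}=\mathsf{BWT}_{\mathsf{T}'}$.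
   Context: Lexicographic order with a proper prefix smaller than the longer string; suffix array $\mathsf{SA}_{\mathsf{T}}$: permutation of $[1..n]$ such that $\mathsf{T}[\mathsf{SA}_{\mathsf{T}}[i]..n]$ is the $i$-th smallest suffix. $x\bmod n$ denotes the representative of $x$ modulo $n$ in $[1..n]$. An arithmetically progressed permutation of length $n$ with ratio $k\in[1..n-1]$ is a permutation $P=[p_1,\ldots,p_n]$ of $[1..n]$ with $p_{i+1}=p_i+k\bmod n$. BWT: $\mathsf{BWT}_{\mathsf{T}}[i]=\mathsf{T}[\mathsf{SA}_{\mathsf{T}}[i]-1\bmod n]$. *)

From mathcomp Require Import all_boot.
Set Implicit Arguments. Unset Strict Implicit. Unset Printing Implicit Defensive.

(* Strings over {a,b} are [seq bool] with a := false, b := true (so a < b).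
   Positions and suffix-array entries are 1-based as in the paper. *)

Fixpoint lexlt (s t : seq bool) : bool :=
  match s, t with
  | [::], [::] => false
  | [::], _ :: _ => true
  | _ :: _, [::] => false
  | x :: s', y :: t' => (~~ x && y) || ((x == y) && lexlt s' t')
  end.

Definition lexle (s t : seq bool) : bool := (s == t) || lexlt s t.

Definition suffix (T : seq bool) (j : nat) : seq bool := drop j.-1 T.

Definition SA (T : seq bool) : seq nat :=
  sort (fun i j => lexle (suffix T i) (suffix T j)) (iota 1 (size T)).

Definition modr (n x : nat) : nat := if x %% n == 0 then n else x %% n.

Definition at1 (P : seq nat) (i : nat) : nat := nth 0 P i.-1.
Definition chr (T : seq bool) (j : nat) : bool := nth false T j.-1.

Definition AP_perm (n k : nat) (P : seq nat) : Prop :=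
  [/\ perm_eq P (iota 1 n), 1 <= k <= n.-1 &
      forall i, 1 <= i < n -> at1 P i.+1 = modr n (at1 P i + k)].

Definition BWT (T : seq bool) : seq bool :=
  [seq chr T (modr (size T) (p.-1)) | p <- SA T].

From Pilot Require Import Defs.
From mathcomp Require Import all_boot zify.
Set Implicit Arguments. Unset Strict Implicit. Unset Printing Implicit Defensive.
Local Notation suffix := Defs.suffix.

(* Since SA_T starts with 1, T is the smallest of its suffixes.  Comparing T
   with its last suffix T[n..n] forces T = a·R and T[n] = b.  The suffixes of
   T' = R·a are then the suffixes T[i..n] of T (i >= 2) with an `a` appended,
   plus the one-letter suffix `a`, which is the smallest of them; appending `a`
   to two strings preserves their order.  Hence SA_T'[i] = SA_T[i] - 1 mod n,
   and both Burrows-Wheeler transforms read the same letters.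
   For the arithmetic part, the suffixes sorted before T[n..n] = b are exactly
   those starting with `a`, so n sits at position m+1 of SA_T.  In closed form
   SA_T[i] = 1 + (i-1)k mod n, so 1 + mk = 0 mod n, and subtracting one from
   every entry of SA_T is the same as rotating it by m positions. *)

Lemma lexlt_irr s : lexlt s s = false.
Proof. by elim: s => //= x s ->; rewrite eqxx; case: x. Qed.

Lemma lexlt_trans s t u : lexlt s t -> lexlt t u -> lexlt s u.
Proof.
elim: s t u => [|x s IH] [|y t] [|z u] //=.
by case: x; case: y; case: z => //=; rewrite ?eqxx //=; exact: IH.
Qed.

Lemma lexlt_total s t : s != t -> lexlt s t || lexlt t s.
Proof.
elim: s t => [|x s IH] [|y t] //=.
by rewrite eqseq_cons; case: x; case: y => //=; exact: IH.
Qed.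

Lemma lexle_refl s : lexle s s.
Proof. by rewrite /lexle eqxx. Qed.

Lemma lexle_trans s t u : lexle s t -> lexle t u -> lexle s u.
Proof.
rewrite /lexle => /orP[/eqP->//|st] /orP[/eqP<-|tu]; first by rewrite st orbT.
by rewrite (lexlt_trans st tu) orbT.
Qed.

Lemma lexle_total s t : lexle s t || lexle t s.
Proof.
case: (eqVneq s t) => [->|/lexlt_total]; first by rewrite lexle_refl.
by rewrite /lexle => /orP[] ->; rewrite !orbT.
Qed.

Lemma lexle_anti s t : lexle s t -> lexle t s -> s = t.
Proof.
rewrite /lexle => /orP[/eqP//|st] /orP[/eqP//|ts].
by have := lexlt_trans st ts; rewrite lexlt_irr.
Qed.

Lemma lexlt_rcons s t : lexlt (rcons s false) (rcons t false) = lexlt s t.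
Proof.
elim: s t => [|x s IH] [|y t] //=.
- by case: y => //=; case: t.
- by rewrite andbF /=; case: s {IH} => [|? ?]; rewrite /= andbF.
- by rewrite IH.
Qed.

Lemma lexle_rcons s t : lexle (rcons s false) (rcons t false) = lexle s t.
Proof. by rewrite /lexle lexlt_rcons eqseq_rcons eqxx andbT. Qed.

Lemma lexle_a_nonempty u : u != [::] -> lexle [:: false] u.
Proof. by case: u => [|[] [|? ?]]. Qed.

Lemma lexle_long_letter w c :
  2 <= size w -> lexle w [:: c] = c && ~~ head false w.
Proof. by case: w => [|x [|y w]] //= _; rewrite /lexle /=; case: x; case: c. Qed.

Lemma lexle_letter_long w c :
  2 <= size w -> lexle [:: c] w = c ==> head false w.
Proof.
by case: w => [|x [|y w]] //= _; rewrite /lexle /=; case: x; case: c; rewrite ?andbF.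
Qed.

Definition suffix_le (T : seq bool) : rel nat :=
  fun i j => lexle (suffix T i) (suffix T j).

Lemma suffix_le_trans T : transitive (suffix_le T).
Proof. by move=> j i l; apply: lexle_trans. Qed.

Lemma size_suffixE T p : size (suffix T p) = size T - p.-1.
Proof. exact: size_drop. Qed.

Lemma head_suffix T p : head false (suffix T p) = chr T p.
Proof. by rewrite -nth0 nth_drop addn0. Qed.

Lemma suffix_first T : suffix T 1 = T.
Proof. exact: drop0. Qed.

Lemma suffix_last T : 0 < size T -> suffix T (size T) = [:: chr T (size T)].
Proof.
move=> T_gt0; rewrite /suffix /chr (drop_nth false) ?ltn_predL // prednK //.
by rewrite drop_oversize.
Qed.

(* Suffixes starting at distinct positions differ (they have distinct sizes). *)
Lemma suffix_inj T i j : 1 <= i <= size T -> 1 <= j <= size T ->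
  suffix T i = suffix T j -> i = j.
Proof. by move=> hi hj /(congr1 size); rewrite !size_suffixE; lia. Qed.

Lemma suffix_le_last_r T x : 1 <= x < size T ->
  suffix_le T x (size T) = chr T (size T) && ~~ chr T x.
Proof.
move=> hx; rewrite /suffix_le suffix_last; last by lia.
by rewrite lexle_long_letter ?head_suffix // size_suffixE; lia.
Qed.

Lemma suffix_le_last_l T x : 1 <= x < size T ->
  suffix_le T (size T) x = chr T (size T) ==> chr T x.
Proof.
move=> hx; rewrite /suffix_le suffix_last; last by lia.
by rewrite lexle_letter_long ?head_suffix // size_suffixE; lia.
Qed.

Lemma SA_perm T : perm_eq (SA T) (iota 1 (size T)).
Proof. by rewrite /SA perm_sort. Qed.

Lemma SA_mem T p : (p \in SA T) = (1 <= p <= size T).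
Proof. by rewrite (perm_mem (SA_perm T)) mem_iota add1n ltnS. Qed.

Lemma size_SA T : size (SA T) = size T.
Proof. by rewrite size_sort size_iota. Qed.

Lemma SA_sorted T : sorted (suffix_le T) (SA T).
Proof. by apply: sort_sorted => i j; apply: lexle_total. Qed.

Lemma SA_charact T s : perm_eq s (iota 1 (size T)) ->
  sorted (suffix_le T) s -> SA T = s.
Proof.
move=> s_perm s_sorted; apply: (sorted_eq_in _ _ (SA_sorted T) s_sorted).
- by move=> i j l _ _ _; apply: suffix_le_trans.
- move=> i j; rewrite !SA_mem => hi hj /andP[ij ji].
  exact: suffix_inj hi hj (lexle_anti ij ji).
- by rewrite (perm_trans (SA_perm T)) // perm_sym.
Qed.

Lemma SA_first_min T j : 1 <= j <= size T -> suffix_le T (at1 (SA T) 1) j.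
Proof.
move=> hj; have : size (SA T) != 0 by rewrite size_SA; lia.
case SAT: (SA T) => [|p s] // _; move: hj; rewrite -SA_mem SAT inE.
case/predU1P=> [->|js]; first exact: lexle_refl.
have := SA_sorted T; rewrite SAT => /(order_path_min (@suffix_le_trans T)).
by move/allP; apply.
Qed.

Section ModuloRepresentative.
Variable n : nat.
Hypothesis n_gt0 : 0 < n.

Lemma modr_mod x : modr n x %% n = x %% n.
Proof. by rewrite /modr; case: eqP => [->|_]; rewrite ?modnn ?modn_mod. Qed.

Lemma modr_eq x y : x = y %[mod n] -> modr n x = modr n y.
Proof. by rewrite /modr => ->. Qed.

Lemma modr_range x : 0 < modr n x <= n.
Proof.
rewrite /modr; case: eqP => [_|/eqP x_n]; first by rewrite n_gt0 leqnn.
by rewrite lt0n x_n ltnW // ltn_pmod.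
Qed.

Lemma modr_small x : 0 < x <= n -> modr n x = x.
Proof.
case/andP=> x0 xn; rewrite /modr; case: (ltngtP x n) xn => // [xn _|-> _].
  by rewrite modn_small //; case: eqP x0 => // ->.
by rewrite modnn eqxx.
Qed.

Lemma modr_top x : modr n x = n -> x = 0 %[mod n].
Proof.
rewrite /modr mod0n; case: eqP => // _ x_n.
by have := ltn_pmod x n_gt0; rewrite x_n ltnn.
Qed.

Lemma mod_pred x y : 0 < x -> 0 < y -> x = y %[mod n] -> x.-1 = y.-1 %[mod n].
Proof.
by move=> x0 y0 xy; apply/eqP; rewrite -(eqn_modDr 1) !addn1 !prednK //; exact/eqP.
Qed.

Lemma modr_pred x y : 0 < x -> 0 < y -> x = y %[mod n] ->
  modr n x.-1 = modr n y.-1.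
Proof. by move=> x0 y0 /(mod_pred x0 y0) /modr_eq. Qed.

Lemma modr_pred_mod x : 0 < x -> modr n (modr n x).-1 = modr n x.-1.
Proof.
by move=> x0; have /andP[r0 _] := modr_range x; apply: modr_pred; rewrite ?modr_mod.
Qed.

End ModuloRepresentative.

(* The cyclic predecessor p - 1 mod n on positions [1..n]; it maps SA_T to
   SA_T'. *)
Definition pred_mod (n p : nat) : nat := modr n p.-1.

Lemma pred_mod_1 n : pred_mod n 1 = n.
Proof. by rewrite /pred_mod /modr mod0n eqxx. Qed.

Lemma pred_mod_small n p : 2 <= p <= n.+1 -> pred_mod n.+1 p = p.-1.
Proof. by move=> hp; rewrite /pred_mod modr_small //; lia. Qed.

Lemma perm_pred_mod n :
  perm_eq (map (pred_mod n.+1) (iota 1 n.+1)) (iota 1 n.+1).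
Proof.
have shift_down : map (pred_mod n.+1) (iota 2 n) = iota 1 n.
  rewrite (iotaDl 1) -map_comp -[RHS]map_id; apply/eq_in_map => p.
  by rewrite mem_iota => hp /=; rewrite pred_mod_small //; lia.
have last_split : iota 1 n.+1 = rcons (iota 1 n) n.+1.
  by rewrite -cats1 -[n.+1]addn1 iotaD add1n addn1.
rewrite [map _ _]/= pred_mod_1 shift_down [in X in perm_eq _ X]last_split.
by rewrite perm_sym perm_rcons.
Qed.

Lemma at1_map f P i : 0 < i <= size P -> at1 (map f P) i = f (at1 P i).
Proof. by move=> hi; rewrite /at1 (nth_map 0) //; lia. Qed.

Lemma AP_perm_mem n k P i : AP_perm n k P -> 1 <= i <= n -> 1 <= at1 P i <= n.
Proof.
case=> P_perm _ _ hi; rewrite -[_ <= n]ltnS -[n.+1]add1n -mem_iota.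
by rewrite -(perm_mem P_perm); apply: mem_nth; rewrite (perm_size P_perm) size_iota; lia.
Qed.

Lemma AP_closed_form n k P : AP_perm n k P -> at1 P 1 = 1 ->
  forall i, 1 <= i <= n -> at1 P i = modr n (1 + i.-1 * k).
Proof.
case=> _ k_range AP_step P1; have n_gt0 : 0 < n by lia.
elim=> // -[_ _|i IH /andP[_ i_n]]; first by rewrite P1 modr_small.
rewrite AP_step ?IH; try lia.
apply: modr_eq; rewrite -modnDml modr_mod // modnDml /= mulSn.
by congr (_ %% n); lia.
Qed.

Lemma AP_pred_step n k p : 0 < n -> 0 < p ->
  pred_mod n (modr n (p + k)) = modr n (pred_mod n p + k).
Proof.
move=> n_gt0 p_gt0; rewrite /pred_mod modr_pred_mod ?addn_gt0 ?p_gt0 //.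
by apply: modr_eq; rewrite -[in RHS]modnDml modr_mod // modnDml; case: p p_gt0.
Qed.

Lemma AP_perm_pred_mod n k P :
  AP_perm n k P -> AP_perm n k (map (pred_mod n) P).
Proof.
move=> AP_P; have [P_perm k_range AP_step] := AP_P.
have [n' n_eq] : exists n', n = n'.+1 by exists n.-1; lia.
have P_size : size P = n by rewrite (perm_size P_perm) size_iota.
split=> //.
  by rewrite n_eq in P_perm *; exact: perm_trans (perm_map _ P_perm) (perm_pred_mod n').
move=> i hi; rewrite !at1_map ?P_size ?AP_step; try lia.
have /andP[p_gt0 _] : 1 <= at1 P i <= n by apply: AP_perm_mem AP_P _; lia.
by apply: AP_pred_step; lia.
Qed.

Lemma AP_rotation n k m i : 0 < n -> 1 + m * k = 0 %[mod n] -> 0 < i ->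
  pred_mod n (modr n (1 + i.-1 * k)) = modr n (1 + (modr n (i + m)).-1 * k).
Proof.
move=> n_gt0 mk_0 i_gt0; rewrite /pred_mod modr_pred_mod // add1n /=.
apply: modr_eq.
have rot_pred : (modr n (i + m)).-1 = (i + m).-1 %[mod n].
  have /andP[r_gt0 _] := modr_range n_gt0 (i + m).
  by apply: mod_pred; rewrite ?modr_mod ?addn_gt0 ?i_gt0.
rewrite -[in RHS]modnDmr -[in RHS]modnMml rot_pred modnMml modnDmr.
have -> : 1 + (i + m).-1 * k = i.-1 * k + (1 + m * k).
  by case: i i_gt0 {rot_pred} => // i _; rewrite addSn /= mulnDl; lia.
by rewrite -[in RHS]modnDmr mk_0 mod0n addn0.
Qed.

Lemma AP_perm_rotation n k P m : AP_perm n k P -> at1 P 1 = 1 ->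
  m < n -> at1 P m.+1 = n ->
  forall i, 1 <= i <= n -> pred_mod n (at1 P i) = at1 P (modr n (i + m)).
Proof.
move=> AP_P P1 m_n Pm i hi; have n_gt0 : 0 < n by lia.
have closed := AP_closed_form AP_P P1.
have mk_0 : 1 + m * k = 0 %[mod n].
  by apply: (modr_top n_gt0); rewrite -[in RHS]Pm closed //; lia.
rewrite closed // closed ?modr_range //.
by apply: AP_rotation => //; lia.
Qed.

Lemma minimal_string_shape T : 2 <= size T ->
  (forall j, 1 <= j <= size T -> lexle T (suffix T j)) ->
  T = false :: behead T /\ chr T (size T) = true.
Proof.
move=> T2 /(_ (size T)); rewrite leqnn andbT => /(_ (ltnW T2)).
rewrite suffix_last ?lexle_long_letter; try lia.
by case: T T2 => [|[] r] //= _; rewrite ?andbF ?andbT.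
Qed.

Lemma chr_rot1 r c q : 1 <= q <= (size r).+1 ->
  chr (rcons r c) (pred_mod (size r).+1 q) = chr (c :: r) q.
Proof.
case: q => // -[_|q hq]; first by rewrite pred_mod_1 /chr /= nth_rcons ltnn eqxx.
by rewrite pred_mod_small // /chr /= nth_rcons ifT //; lia.
Qed.

Lemma suffix_rot1_first r c :
  suffix (rcons r c) (pred_mod (size r).+1 1) = [:: c].
Proof. by rewrite pred_mod_1 /suffix /= drop_rcons // drop_size. Qed.

Lemma suffix_rot1 r c i : 2 <= i <= (size r).+1 ->
  suffix (rcons r c) (pred_mod (size r).+1 i) = rcons (suffix (c :: r) i) c.
Proof.
move=> hi; rewrite pred_mod_small // /suffix drop_rcons; last by lia.
by case: i hi => [|[|i]].
Qed.

Section RotateMinimal.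
Variable r : seq bool.
Local Notation T := (false :: r).
Local Notation n := (size r).+1.
Hypothesis T_min : forall j, 1 <= j <= n -> lexle T (suffix T j).

Lemma suffix_not_le_first i : 2 <= i <= n -> lexle (suffix T i) T = false.
Proof.
move=> hi; apply/negP => le_iT.
have same : suffix T i = suffix T 1.
  by rewrite suffix_first; apply: lexle_anti le_iT (T_min _); lia.
suff : i = 1 by lia.
by apply: (suffix_inj _ _ same); rewrite /=; lia.
Qed.

Lemma rot1_suffix_order i j : 1 <= i <= n -> 1 <= j <= n ->
  suffix_le (rcons r false) (pred_mod n i) (pred_mod n j) = suffix_le T i j.
Proof.
have nonempty p : 1 <= p <= n -> suffix T p != [::].
  by move=> hp; rewrite -size_eq0 size_suffixE /=; lia.
move=> /andP[i_gt0 i_n] /andP[j_gt0 j_n]; rewrite /suffix_le.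
have [->|i2] : i = 1 \/ 2 <= i by lia.
all: have [->|j2] : j = 1 \/ 2 <= j by lia.
- by rewrite !lexle_refl.
- rewrite suffix_rot1_first suffix_rot1 ?j2 ?j_n // suffix_first T_min ?j_gt0 ?j_n //.
  by rewrite lexle_a_nonempty // -size_eq0 size_rcons.
- rewrite suffix_rot1_first suffix_rot1 ?i2 // suffix_first suffix_not_le_first ?i2 //.
  by rewrite lexle_long_letter // size_rcons ltnS lt0n size_eq0 nonempty ?i_n; lia.
- by rewrite !suffix_rot1 ?i2 ?j2 ?i_n ?j_n // lexle_rcons.
Qed.

Lemma SA_rot1 : SA (rcons r false) = map (pred_mod n) (SA T).
Proof.
apply: SA_charact.
  rewrite size_rcons; apply: perm_trans (perm_pred_mod (size r)).
  exact: perm_map (SA_perm T).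
rewrite sorted_map -(eq_in_sorted (P := [pred p | 1 <= p <= n]) (e := suffix_le T)).
- exact: SA_sorted.
- by move=> i j hi hj; rewrite /= rot1_suffix_order.
- by apply/allP => p; rewrite SA_mem.
Qed.

Lemma BWT_rot1 : BWT T = BWT (rcons r false).
Proof.
rewrite /BWT SA_rot1 -map_comp size_rcons; apply/eq_in_map => p.
rewrite SA_mem => hp /=; rewrite [RHS]chr_rot1 //.
exact: modr_range.
Qed.

End RotateMinimal.

Lemma minimal_rot1 T : 2 <= size T ->
  (forall j, 1 <= j <= size T -> lexle T (suffix T j)) ->
  SA (rot 1 T) = map (pred_mod (size T)) (SA T) /\ BWT T = BWT (rot 1 T).
Proof.
move=> T2 T_min; have [T_eq _] := minimal_string_shape T2 T_min.
by move: T_min; rewrite T_eq rot1_cons => T_min; rewrite SA_rot1 ?BWT_rot1.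
Qed.

Lemma map_chr_iota T : map (chr T) (iota 1 (size T)) = T.
Proof.
apply: (@eq_from_nth _ false); first by rewrite size_map size_iota.
move=> i; rewrite size_map size_iota => hi.
by rewrite (nth_map 0) ?size_iota // nth_iota.
Qed.

(* If T ends with `b`, the suffixes sorted before the last one are exactly
   those starting with `a`, so the last position sits at index #a(T). *)
Lemma index_last_count T : 0 < size T -> chr T (size T) = true ->
  index (size T) (SA T) = count (fun c => ~~ c) T.
Proof.
move=> T_gt0 last_b; set n := size T; set s := SA T; set j := index n s.
have n_s : n \in s by rewrite SA_mem leqnn T_gt0.
have s_split : s = take j s ++ n :: drop j.+1 s.
  by rewrite -{1}(cat_take_drop j s) (drop_nth 0) ?index_mem // nth_index.
have in_range x : x \in s -> x != n -> 1 <= x < n.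
  by rewrite SA_mem -/n; lia.
have s_uniq : uniq s by rewrite (perm_uniq (SA_perm T)) iota_uniq.
have : pairwise (suffix_le T) s.
  by rewrite -sorted_pairwise ?SA_sorted //; exact: suffix_le_trans.
move: s_uniq; rewrite s_split cat_uniq pairwise_cat /= allrel_consr.
case/and4P=> _ /norP[n_take _] n_drop _.
case/and4P=> /andP[/allP before _] _ /allP after _.
rewrite -[in RHS](map_chr_iota T) count_map -/n.
rewrite -(permP (SA_perm T)) -/s s_split count_cat /= last_b.
have in_take x : x \in take j s -> ~~ chr T x.
  move=> x_take; have x_n : x != n by apply: contraNneq n_take => <-.
  have := before x x_take; rewrite suffix_le_last_r ?last_b //.
  exact: in_range (mem_take x_take) x_n.
have in_drop x : x \in drop j.+1 s -> chr T x.
  move=> x_drop; have x_n : x != n by apply: contraNneq n_drop => <-.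
  have := after x x_drop; rewrite suffix_le_last_l ?last_b //.
  exact: in_range (mem_drop x_drop) x_n.
rewrite (eq_in_count (a2 := predT) in_take) count_predT size_take index_mem n_s.
by rewrite (eq_in_count (a2 := pred0)) ?count_pred0 ?addn0 // => x /in_drop /= ->.
Qed.

Theorem lemma8 (n k : nat) (T : seq bool) :
  2 <= n -> size T = n ->
  AP_perm n k (SA T) -> at1 (SA T) 1 = 1 ->
  let m := count (fun c => ~~ c) T in
  let T' := rot 1 T in
  (forall i, 1 <= i <= n -> at1 (SA T') i = modr n (at1 (SA T) i).-1) /\
  (forall i, 1 <= i <= n -> at1 (SA T') i = at1 (SA T) (modr n (i + m))) /\
  at1 (SA T') 1 = n /\
  AP_perm n k (SA T') /\
  BWT T = BWT T'.
Proof.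
move=> n2 sT AP_T SA_1 m T'; have T2 : 2 <= size T by rewrite sT.
have T_min j : 1 <= j <= size T -> lexle T (suffix T j).
  by move=> hj; rewrite -[X in lexle X]suffix_first -SA_1; exact: SA_first_min.
have [_ last_b] := minimal_string_shape T2 T_min.
have [SA_T' BWT_T'] := minimal_rot1 T2 T_min.
have m_index : index n (SA T) = m by rewrite -sT index_last_count //; lia.
have m_n : m < n.
  by rewrite -m_index -[X in _ < X]sT -size_SA index_mem SA_mem sT leqnn; lia.
have n_at_m : at1 (SA T) m.+1 = n.
  by rewrite /at1 -m_index nth_index // SA_mem sT leqnn; lia.
rewrite sT in SA_T'.
have at1_T' i : 1 <= i <= n -> at1 (SA T') i = pred_mod n (at1 (SA T) i).
  by move=> hi; rewrite SA_T' at1_map // size_SA sT.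
split; first exact: at1_T'.
split; first by move=> i hi; rewrite at1_T' // (AP_perm_rotation AP_T SA_1 m_n n_at_m).
split; first by rewrite at1_T' ?SA_1 ?pred_mod_1 //; lia.
by rewrite SA_T'; split; first exact: AP_perm_pred_mod.
Qed.
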